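(* Let $X$ be a nonempty open bounded subset of $\mathbb{R}^n$. Suppose a sequence $(F_k)_k$ in $C_{cm}(X,\mathbb{R}^n)$ converges (for the metric $s$) to $F\in C_{cm}(X,\mathbb{R}^n)$, a sequence of points $x_k\in X$ converges to $x\in X$, a sequence of vectors $\eta_k\in\mathbb{R}^n$ converges to $\eta\in\mathbb{R}^n$, and $\eta_k\in F_k(x_k)$ for every $k$. Then $\eta\in F(x)$. The same holds with $C_{cm}(X,\mathbb{R}^n)$ and $s$ replaced by $C_{ae}(X,\mathbb{R}^n)$ and $r$.
   Context: Comeager = complement is a countable union of nowhere dense subsets of $X$. $C_{cm}(X,\mathbb{R}^m)$: classes of bounded maps $X\to\mathbb{R}^m$ continuous on a comeager set, modulo coincidence on a comeager set; $C_{ae}(X,\mathbb{R}^m)$: classes of bounded maps continuous a.e., modulo coincidence a.e. For $\xi\in\mathbb{R}^m$, $\langle f(\cdot),\xi\rangle$ is the real class of $x\mapsto\langle\varphi(x),\xi\rangle$. For real classes and $k\in\mathbb{N}$: $f_k^-=\sup\{\varphi\in Lip_k(X,\mathbb{R}):\varphi\le f\}$, $f_k^+=\inf\{\varphi\in Lip_k(X,\mathbb{R}):\varphi\ge f\}$; $h(\varphi,\psi)$ is the Hausdorff distance of closures of graphs in $\mathrm{cl}X\times\mathbb{R}$ of bounded continuous functions, $\delta=h+\int_X|\varphi-\psi|dx$; $s(f,g)=\sup_k\max\{h(f_k^-,g_k^-),h(f_k^+,g_k^+)\}$, $r(f,g)=\sup_k\max\{\delta(f_k^-,g_k^-),\delta(f_k^+,g_k^+)\}$;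 for vector classes $s(f,g)=\sup_{\|\xi\|=1}s(\langle f,\xi\rangle,\langle g,\xi\rangle)$ and likewise $r$. The value of a class $f$ at $x$ is $f(x)=\bigcap_{\varepsilon>0}\overline{\mathrm{co}}\{\varphi(y):y\in B(x,\varepsilon)\cap C_\varphi\}$ for a representative $\varphi$ with continuity set $C_\varphi$ (independent of $\varphi$). *)

From HB Require Import structures.
From mathcomp Require Import all_boot all_order all_algebra.
From mathcomp Require Import all_classical all_reals all_analysis.
Set Implicit Arguments. Unset Strict Implicit. Unset Printing Implicit Defensive.
Import Order.TTheory GRing.Theory Num.Theory.
Import numFieldNormedType.Exports.
Local Open Scope classical_set_scope.
Local Open Scope ring_scope.

Section Defs.
Variables (R : realType) (n : nat).
Notation V := 'rV[R]_n.

Definition dotp (u v : V) : R := \sum_(i < n) u ord0 i * v ord0 i.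
Definition enorm (u : V) : R := Num.sqrt (dotp u u).
Definition eball (x : V) (e : R) : set V := [set y | enorm (y - x) < e].

Definition pdist (p q : V * R) : R :=
  Num.sqrt (enorm (p.1 - q.1) ^+ 2 + (p.2 - q.2) ^+ 2).
Definition pt_set_dist (p : V * R) (A : set (V * R)) : R :=
  inf [set pdist p q | q in A].
Definition hausdorff (A B : set (V * R)) : R :=
  Num.max (sup [set pt_set_dist a B | a in A]) (sup [set pt_set_dist b A | b in B]).

Variable X : set V.

Definition bounded_set_e (A : set V) := exists M : R, forall x, A x -> enorm x <= M.
Definition bounded_on {T} (nm : T -> R) (f : V -> T) :=
  exists M : R, forall x, X x -> nm (f x) <= M.

Definition graph (f : V -> R) : set (V * R) := [set p | X p.1 /\ p.2 = f p.1].
Definition hdist (f g : V -> R) : R := hausdorff (closure (graph f)) (closure (graph g)).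

(* Lebesgue integral over X of a nonnegative function, computed as an
   iterated (Tonelli) integral of one-dimensional Lebesgue integrals *)
Fixpoint iter_int (m : nat) : ('rV[R]_m -> \bar R) -> \bar R :=
  match m return ('rV[R]_m -> \bar R) -> \bar R with
  | 0 => fun f => f 0
  | m'.+1 => fun f =>
      (\int[@lebesgue_measure R]_(a in setT)
         iter_int (fun v : 'rV[R]_m' => f (row_mx (a%:M : 'rV[R]_1) v)))%E
  end.
Definition int_abs_diff (f g : V -> R) : R :=
  fine (iter_int (fun x => (if `[< X x >] then `|f x - g x| else 0)%:E)).
Definition ddist (f g : V -> R) : R := hdist f g + int_abs_diff f g.

Definition nowhere_dense (A : set V) := interior (closure A) = set0.
Definition comeager (S : set V) :=
  S `<=` X /\ exists A : nat -> set V,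
    (forall j, A j `<=` X /\ nowhere_dense (A j)) /\ X `\` S = \bigcup_j A j.

Definition box (a b : V) : set V := [set x | forall i, a ord0 i <= x ord0 i <= b ord0 i].
Definition vol (a b : V) : R := \prod_(i < n) (b ord0 i - a ord0 i).
Definition null_set (N : set V) :=
  forall e : R, 0 < e -> exists a b : nat -> V,
    (forall j i, a j ord0 i <= b j ord0 i) /\ N `<=` \bigcup_j box (a j) (b j) /\
    forall m, \sum_(j < m) vol (a j) (b j) < e.
Definition full_ae (S : set V) := S `<=` X /\ null_set (X `\` S).

Definition cont_set {m} (f : V -> 'rV[R]_m) : set V := [set x | X x /\ {for x, continuous f}].

(* representatives of elements of C_cm(X,R^m) and C_ae(X,R^m) *)
Definition is_Ccm {m} (f : V -> 'rV[R]_m) :=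
  bounded_on (fun v => Num.sqrt (\sum_(i < m) v ord0 i ^+ 2)) f /\ comeager (cont_set f).
Definition is_Cae {m} (f : V -> 'rV[R]_m) :=
  bounded_on (fun v => Num.sqrt (\sum_(i < m) v ord0 i ^+ 2)) f /\ full_ae (cont_set f).

Definition Lip (k : R) (f : V -> R) :=
  forall x y, X x -> X y -> `|f x - f y| <= k * enorm (x - y).

(* f_k^- and f_k^+ for a real class (given by a representative f), where
   the order between a function and a class is "on a large set", large being
   comeager (for C_cm) or full_ae (for C_ae) *)
Definition low_env (large : set V -> Prop) (f : V -> R) (k : nat) : V -> R :=
  fun x => sup [set phi x | phi in
    [set phi | Lip k%:R phi /\ exists S, large S /\ forall y, S y -> phi y <= f y]].
Definition up_env (large : set V -> Prop) (f : V -> R) (k : nat) : V -> R :=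
  fun x => inf [set phi x | phi in
    [set phi | Lip k%:R phi /\ exists S, large S /\ forall y, S y -> f y <= phi y]].

Definition scal_metric (large : set V -> Prop) (d : (V -> R) -> (V -> R) -> R)
    (f g : V -> R) : \bar R :=
  ereal_sup [set (Num.max (d (low_env large f k) (low_env large g k))
                          (d (up_env large f k) (up_env large g k)))%:E
            | k in [set k : nat | (0 < k)%N]].

Definition vec_metric (large : set V -> Prop) (d : (V -> R) -> (V -> R) -> R)
    (F G : V -> V) : \bar R :=
  ereal_sup [set scal_metric large d (fun x => dotp (F x) xi) (fun x => dotp (G x) xi)
            | xi in [set xi : V | enorm xi = 1]].

Definition s_metric := vec_metric comeager hdist.
Definition r_metric := vec_metric full_ae ddist.

Definition conv_hull (A : set V) : set V :=
  [set z | exists (p : nat) (w : 'I_p -> R) (a : 'I_p -> V),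
     (forall i, 0 <= w i /\ A (a i)) /\ \sum_(i < p) w i = 1 /\
     z = \sum_(i < p) w i *: a i].
Definition value (F : V -> V) (x : V) : set V :=
  [set eta | forall e : R, 0 < e ->
     closure (conv_hull (F @` (eball x e `&` cont_set F))) eta].

End Defs.

(* Suppose eta is not in F(x).  Then for some e > 0, eta lies outside the
   closed convex hull of the values F(y) at continuity points y near x, so a
   unit vector xi and delta > 0 separate them: <F(y), xi> <= <eta, xi> - delta.
   A cone c + L |y - x|_1 over the level c = <eta, xi> - delta is then
   k-Lipschitz for large k and dominates f = <F, xi> on the continuity set of
   F, which is large (comeager, resp. of full measure) and hence dense in X;
   so it dominates the upper envelope f_k^+.  On the other side, eta_j in
   F_j(x_j) gives <eta_j, xi> <= (f_j)_k^+(x_j), since every k-Lipschitz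
   majorant of f_j on a dense set majorizes f_j at continuity points.  Both
   metrics s and r dominate the Hausdorff distance between the graphs of
   (f_j)_k^+ and f_k^+, so (f_j)_k^+(x_j) is close to f_k^+ at a point near
   x_j, hence near x.  Letting j grow contradicts the separation. *)

From HB Require Import structures.
From mathcomp Require Import all_boot all_order all_algebra.
From mathcomp Require Import all_classical all_reals all_analysis.
From mathcomp Require Import ring lra measurable_realfun.
Import Order.TTheory GRing.Theory Num.Theory.
Import numFieldNormedType.Exports.
Local Open Scope classical_set_scope.
Local Open Scope ring_scope.

Set Implicit Arguments.
Unset Strict Implicit.
Unset Printing Implicit Defensive.

Section Euclid.
Variables (R : realType) (n : nat).
Notation V := 'rV[R]_n.

Definition l1norm (u : V) : R := \sum_i `|u ord0 i|.

Lemma dotpC (u v : V) : dotp u v = dotp v u.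
Proof. by apply: eq_bigr => i _; rewrite mulrC. Qed.

Lemma dotpDl (u v w : V) : dotp (u + v) w = dotp u w + dotp v w.
Proof. by rewrite /dotp -big_split; apply: eq_bigr => i _; rewrite mxE mulrDl. Qed.

Lemma dotpBl (u v w : V) : dotp (u - v) w = dotp u w - dotp v w.
Proof.
rewrite dotpDl /dotp -sumrN; congr (_ + _).
by apply: eq_bigr => i _; rewrite mxE mulNr.
Qed.

Lemma dotpZl a (u w : V) : dotp (a *: u) w = a * dotp u w.
Proof. by rewrite /dotp mulr_sumr; apply: eq_bigr => i _; rewrite mxE mulrA. Qed.

Lemma dotpBr (u v w : V) : dotp w (u - v) = dotp w u - dotp w v.
Proof. by rewrite dotpC dotpBl !(dotpC w). Qed.

Lemma dotpZr a (u w : V) : dotp w (a *: u) = a * dotp w u.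
Proof. by rewrite dotpC dotpZl dotpC. Qed.

Lemma dotpBZ (u v : V) t :
  dotp (u - t *: v) (u - t *: v) = dotp u u - 2 * t * dotp u v + t ^+ 2 * dotp v v.
Proof. by rewrite !dotpBl !dotpBr !dotpZl !dotpZr (dotpC v u) expr2; ring. Qed.

Lemma dotp_suml p (F : 'I_p -> V) w :
  dotp (\sum_(i < p) F i) w = \sum_(i < p) dotp (F i) w.
Proof.
elim: p F => [|p IHp] F; last by rewrite !big_ord_recr /= dotpDl IHp.
by rewrite !big_ord0 /dotp big1 // => i _; rewrite mxE mul0r.
Qed.

Lemma sqr_coord_le_dotp (u : V) i : u ord0 i ^+ 2 <= dotp u u.
Proof.
rewrite /dotp (bigD1 i) //= -expr2 lerDl.
by apply: sumr_ge0 => j _; rewrite -expr2 sqr_ge0.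
Qed.

Lemma dotp_ge0 (u : V) : 0 <= dotp u u.
Proof. by apply: sumr_ge0 => i _; rewrite -expr2 sqr_ge0. Qed.

Lemma enorm_ge0 (u : V) : 0 <= enorm u.
Proof. exact: sqrtr_ge0. Qed.

Lemma enorm_sqr (u : V) : enorm u ^+ 2 = dotp u u.
Proof. by rewrite sqr_sqrtr // dotp_ge0. Qed.

Lemma coord_le_enorm (u : V) i : `|u ord0 i| <= enorm u.
Proof.
by rewrite -ler_sqr ?nnegrE ?enorm_ge0 // real_normK ?num_real // enorm_sqr sqr_coord_le_dotp.
Qed.

Lemma l1norm_ge0 (u : V) : 0 <= l1norm u.
Proof. exact: sumr_ge0. Qed.

Lemma l1norm_le (u : V) r : (forall i, `|u ord0 i| <= r) -> l1norm u <= n%:R * r.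
Proof.
move=> ur; apply: le_trans (_ : _ <= \sum_(i < n) r) _; first exact: ler_sum.
by rewrite sumr_const card_ord mulr_natl.
Qed.

Lemma l1norm_le_enorm (u : V) : l1norm u <= n%:R * enorm u.
Proof. by apply: l1norm_le => i; exact: coord_le_enorm. Qed.

Lemma enorm_le_l1norm (u : V) : enorm u <= l1norm u.
Proof.
rewrite -ler_sqr ?nnegrE ?enorm_ge0 ?l1norm_ge0 // enorm_sqr expr2 /l1norm mulr_suml.
apply: ler_sum => i _; apply: le_trans (ler_norm _) _; rewrite normrM.
by apply: ler_wpM2l => //; rewrite (bigD1 i) //= lerDl sumr_ge0.
Qed.

Lemma enorm_le_coord (u : V) r : (forall i, `|u ord0 i| <= r) -> enorm u <= n%:R * r.
Proof. by move=> ur; apply: le_trans (enorm_le_l1norm u) (l1norm_le ur). Qed.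

Lemma l1norm_lipschitz (u v : V) : `|l1norm u - l1norm v| <= l1norm (u - v).
Proof.
rewrite /l1norm -sumrB; apply: le_trans (ler_norm_sum _ _ _) _.
by apply: ler_sum => i _; rewrite !mxE; exact: ler_dist_dist.
Qed.

Lemma dotp_le_l1norm (u w : V) r : (forall i, `|u ord0 i| <= r) ->
  `|dotp u w| <= r * l1norm w.
Proof.
move=> ur; apply: le_trans (ler_norm_sum _ _ _) _; rewrite mulr_sumr.
by apply: ler_sum => i _; rewrite normrM ler_wpM2r.
Qed.

End Euclid.

Lemma dense_setC_closure (T : topologicalType) (A : set T) :
  interior (closure A) = set0 -> dense (~` closure A).
Proof.
move=> A0 U [u Uu] oU; apply: contrapT => /set0P/negP/negPn/eqP UA.
have UcA : U `<=` closure A.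
  by move=> y Uy; apply: contrapT => nAy; have : (U `&` ~` closure A) y by []; rewrite UA.
have : interior (closure A) u by apply: (interiorS UcA); move: oU; rewrite openE; exact.
by rewrite A0.
Qed.

(* The library does not declare 'rV[R]_n as a completeNormedModType, which
   the Baire category theorem needs; this alias carries the joined instance. *)
Definition rV_complete (R : realType) (n : nat) := 'rV[R]_n.
HB.instance Definition _ (R : realType) (n : nat) := NormedModule.on (rV_complete R n).
HB.instance Definition _ (R : realType) (n : nat) := Complete.on (rV_complete R n).

Section Density.
Variables (R : realType) (n : nat).
Notation V := 'rV[R]_n.
Variable X : set V.

Definition dense_in (S : set V) := forall z r, X z -> 0 < r ->
  exists2 y, S y & forall i, `|y ord0 i - z ord0 i| < r.

Lemma ball_coordP (z y : V) r : 0 < r ->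
  ball z r y <-> forall i, `|y ord0 i - z ord0 i| < r.
Proof.
move=> r0; split => [[_ zy] i|zy]; first by move: (zy ord0 i); rewrite /ball /= distrC.
by split => // i j; rewrite (ord1 i) /ball /= distrC.
Qed.

Lemma comeager_dense S : open X -> comeager X S -> dense_in S.
Proof.
move=> oX [_ [A [AX XS]]] z r Xz r0.
pose G j : set (rV_complete R n) := ~` closure (A j).
have oG j : open (G j) /\ dense (G j).
  split; first by rewrite openC; exact: closed_closure.
  exact/dense_setC_closure/(proj2 (AX j)).
have [||y [[Xy zy] Gy]] := Baire oG (O := X `&` ball z r).
- by exists z; split => //; exact: ballxx.
- by apply: openI => //; exact: ball_open.
exists y; last exact/ball_coordP.
apply: contrapT => nSy; have : (X `\` S) y by [].
by rewrite XS => -[j _ Ajy]; apply: (Gy j I); exact: subset_closure.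
Qed.

End Density.

Section BoxCover.
Variable R : realType.
Notation lam := (@lebesgue_measure R).
Local Open Scope ereal_scope.

Lemma lebesgue_measure_cc (a b : R) : (a <= b)%R -> lam `[a, b]%classic = (b - a)%:E.
Proof.
move=> ab; rewrite lebesgue_measure_itv /= lte_fin.
case: (ltP a b) => [_|ba]; first by rewrite EFinB.
by rewrite (@le_anti _ _ b a) ?ba ?ab // subrr.
Qed.

Lemma indic_cc (a b t : R) :
  \1_(`[a, b]%classic) t = (if `[< (a <= t <= b)%R >] then 1 else 0 : R)%R.
Proof.
rewrite indicE; case: asboolP => h; first by rewrite mem_set //= in_itv /= h.
by rewrite memNset //= in_itv /=; apply/negP.
Qed.

Lemma indic_cc_ge0 (a b t : R) : (0 <= (\1_(`[a, b]%classic) t : R))%R.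
Proof. by rewrite indic_cc; case: ifP. Qed.

Lemma integral_scaled_indic_cc (k a b : R) : (0 <= k)%R -> (a <= b)%R ->
  \int[lam]_(t in setT) (k * \1_(`[a, b]%classic) t)%:E = (k * (b - a))%:E.
Proof.
move=> k0 ab; under eq_integral do rewrite EFinM.
rewrite ge0_integralZl_EFin //.
- by rewrite integral_indic ?setIT // EFinM; congr (_ * _); exact: lebesgue_measure_cc.
- apply/measurable_EFinP.
  exact: (@measurable_indic _ R R setT `[a, b]%classic (measurable_itv _)).
Qed.

(* Boxes in R^m are handled through their corner functions 'I_m -> R, so that
   the first coordinate can be split off for an induction on m. *)
Definition box_indic m (a b y : 'I_m -> R) : R :=
  if `[< forall i, (a i <= y i <= b i)%R >] then 1%R else 0%R.
Definition box_vol m (a b : 'I_m -> R) : R := \prod_(i < m) (b i - a i).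
Definition ftail m (f : 'I_m.+1 -> R) : 'I_m -> R := fun i => f (lift ord0 i).
Definition fcons m (t : R) (y : 'I_m -> R) : 'I_m.+1 -> R :=
  fun i => if unlift ord0 i is Some i' then y i' else t.

Lemma box_indic_ge0 m (a b y : 'I_m -> R) : (0 <= box_indic a b y)%R.
Proof. by rewrite /box_indic; case: ifP. Qed.

Lemma box_vol_ge0 m (a b : 'I_m -> R) : (forall i, a i <= b i)%R -> (0 <= box_vol a b)%R.
Proof. by move=> ab; apply: prodr_ge0 => i _; rewrite subr_ge0. Qed.

Lemma box_vol_cons m (a b : 'I_m.+1 -> R) :
  box_vol a b = ((b ord0 - a ord0) * box_vol (ftail a) (ftail b))%R.
Proof. by rewrite /box_vol big_ord_recl. Qed.

Lemma forall_ord_succ m (P : 'I_m.+1 -> Prop) :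
  (forall i, P i) <-> P ord0 /\ forall i, P (lift ord0 i).
Proof.
split => [H|[H0 H] i]; first by split.
by case: (unliftP ord0 i) => [j ->|->].
Qed.

Lemma fcons0 m t (y : 'I_m -> R) : fcons t y ord0 = t.
Proof. by rewrite /fcons unlift_none. Qed.

Lemma fconsS m t (y : 'I_m -> R) i : fcons t y (lift ord0 i) = y i.
Proof. by rewrite /fcons liftK. Qed.

Lemma box_indic_fcons m (a b : 'I_m.+1 -> R) t y :
  box_indic a b (fcons t y) =
  (\1_(`[a ord0, b ord0]%classic) t * box_indic (ftail a) (ftail b) y)%R.
Proof.
rewrite indic_cc /box_indic.
have E : (forall i, a i <= fcons t y i <= b i)%R <->
    (a ord0 <= t <= b ord0)%R /\ (forall i, ftail a i <= y i <= ftail b i)%R.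
  rewrite forall_ord_succ fcons0; split => -[h1 h2]; split => // i;
    by [rewrite -(fconsS t y) h2 | rewrite fconsS h2].
case: asboolP => h; case: asboolP => h1; case: asboolP => h2;
  rewrite ?mul1r ?mul0r //; exfalso; tauto.
Qed.

Lemma weighted_interval_cover_le (c d V0 : R) (u a b : nat -> R) :
  (c <= d)%R -> (0 <= V0)%R -> (forall j, 0 <= u j)%R -> (forall j, a j <= b j)%R ->
  (forall t, (c <= t <= d)%R -> V0%:E <= \sum_(j <oo) (u j * \1_(`[a j, b j]%classic) t)%:E) ->
  (V0 * (d - c))%:E <= \sum_(j <oo) (u j * (b j - a j))%:E.
Proof.
move=> cd V00 u0 ab cover.
pose h j t := (u j * \1_(`[a j, b j]%classic) t)%:E.
have h0 j t : 0 <= h j t by rewrite lee_fin mulr_ge0 ?indic_cc_ge0.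
have mh j : measurable_fun setT (h j).
  by apply/measurable_EFinP; apply: measurable_funM.
pose G t := \sum_(j <oo) h j t.
have mG : measurable_fun setT G by exact: ge0_emeasurable_sum.
have -> : (V0 * (d - c))%:E = \int[lam]_(t in `[c, d]%classic) V0%:E.
  rewrite integral_cst; last exact: measurable_itv.
  by rewrite EFinM; congr (_ * _); symmetry; exact: lebesgue_measure_cc.
apply: (@le_trans _ _ (\int[lam]_(t in `[c, d]%classic) G t)).
  apply: ge0_le_integral => //.
  exact: measurable_funS measurableT (@subsetT _ _) mG.
apply: (@le_trans _ _ (\int[lam]_(t in setT) G t)).
  by apply: ge0_subset_integral => // t _; apply: nneseries_ge0.
rewrite integral_nneseries //; apply: lee_nneseries => j *.
  by apply: integral_ge0 => t _.
by rewrite integral_scaled_indic_cc.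
Qed.

(* The weights make the induction on the dimension go through: slicing at a
   first coordinate t turns a covering of the box into a weighted covering of
   its fibre, the weights absorbing the indicators of the first-coordinate
   intervals. *)
Lemma box_vol_le_cover m (c d : 'I_m -> R) (a b : nat -> 'I_m -> R) (w : nat -> R) :
  (forall i, c i <= d i)%R -> (forall j i, a j i <= b j i)%R -> (forall j, 0 <= w j)%R ->
  (forall y, (forall i, c i <= y i <= d i)%R ->
     1 <= \sum_(j <oo) (w j * box_indic (a j) (b j) y)%:E) ->
  (box_vol c d)%:E <= \sum_(j <oo) (w j * box_vol (a j) (b j))%:E.
Proof.
elim: m c d a b w => [|m IHm] c d a b w cd ab w0 cover.
  have box0 (a' b' y : 'I_0 -> R) : box_indic a' b' y = 1%R.
    by rewrite /box_indic asboolT // => -[].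
  rewrite /box_vol big_ord0; apply: le_trans (cover c _) _; first by case.
  apply: lee_nneseries => j *; first by rewrite box0 mulr1 lee_fin.
  by rewrite box0 big_ord0.
have tail_vol0 j : (0 <= w j * box_vol (ftail (a j)) (ftail (b j)))%R.
  by rewrite mulr_ge0 // box_vol_ge0 // => i; exact: ab.
have -> : \sum_(j <oo) (w j * box_vol (a j) (b j))%:E =
    \sum_(j <oo) (w j * box_vol (ftail (a j)) (ftail (b j)) * (b j ord0 - a j ord0))%:E.
  by apply: eq_eseriesr => j _; rewrite box_vol_cons; congr (_%:E); ring.
rewrite box_vol_cons mulrC; apply: weighted_interval_cover_le => //.
  by rewrite box_vol_ge0 // => i; exact: cd.
move=> t ct; have fibre := IHm (ftail c) (ftail d) (fun j => ftail (a j)) (fun j => ftail (b j))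
  (fun j => w j * \1_(`[a j ord0, b j ord0]%classic) t)%R.
apply: le_trans (fibre _ _ _ _) _.
- by move=> i; exact: cd.
- by move=> j i; exact: ab.
- by move=> j; rewrite mulr_ge0 ?indic_cc_ge0.
- move=> y yc; apply: le_trans (cover (fcons t y) _) _.
    by apply/forall_ord_succ; rewrite fcons0; split => // i; rewrite fconsS; exact: yc.
  apply: lee_nneseries => j *; first by rewrite lee_fin mulr_ge0 ?box_indic_ge0.
  by rewrite box_indic_fcons mulrA.
- by apply: lee_nneseries => j *; rewrite mulrAC // lee_fin mulr_ge0 ?indic_cc_ge0 ?tail_vol0.
Qed.

End BoxCover.

Lemma full_ae_dense (R : realType) (n : nat) (X S : set 'rV[R]_n) :
  open X -> full_ae X S -> dense_in X S.
Proof.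
move=> oX [SX nullXS] z r Xz r0; apply: contrapT => Sfar.
have /nbhs_ballP [rho rho0 zX] : nbhs z X by move: oX; rewrite openE => /(_ z Xz).
pose dl := Num.min r rho / 2.
have dl0 : 0 < dl by rewrite divr_gt0 // lt_min r0 rho0.
have [dlr dlrho] : dl < r /\ dl < rho.
  have m0 : 0 < Num.min r rho by rewrite lt_min r0 rho0.
  by rewrite /dl; split; [have := ge_min r r rho | have := ge_min rho r rho];
    rewrite lexx ?orbT /= => mle; lra.
have [a [b [ab [cover small]]]] := nullXS _ (divr_gt0 (exprn_gt0 n dl0) (ltr0Sn R 1)).
have box_in (y : 'I_n -> R) : (forall i, z ord0 i <= y i <= z ord0 i + dl) ->
    forall i, `|(\row_i y i) ord0 i - z ord0 i| <= dl.
  by move=> zy i; rewrite mxE ger0_norm ?subr_ge0 ?lerBlDl; case/andP: (zy i).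
have covered y : (forall i, z ord0 i <= y i <= z ord0 i + dl) ->
    (1 <= \sum_(j <oo) (1 * box_indic (fun i => a j ord0 i) (fun i => b j ord0 i) y)%:E)%E.
  move=> zy; pose v : 'rV[R]_n := \row_i y i.
  have Xv : X v.
    by apply/zX/ball_coordP => // i; apply: le_lt_trans (box_in _ zy i) dlrho.
  have nSv : ~ S v by move=> Sv; apply: Sfar; exists v => // i; exact: le_lt_trans (box_in _ zy i) dlr.
  have [j _ vj] := cover v (conj Xv nSv).
  apply: le_trans (nneseries_lim_ge (P := xpredT) j.+1 _) => /=; last first.
    by move=> k _ _; rewrite lee_fin mul1r box_indic_ge0.
  rewrite big_nat_recr //= mul1r /box_indic asboolT => [|i]; last by have := vj i; rewrite mxE.
  by apply: leeDr; apply: sume_ge0 => k _; rewrite lee_fin mul1r box_indic_ge0.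
have zdl i : z ord0 i <= z ord0 i + dl by rewrite lerDl ltW.
have := box_vol_le_cover zdl (fun j i => ab j i) (fun=> ler01) covered.
have -> : box_vol (fun i => z ord0 i) (fun i => z ord0 i + dl) = dl ^+ n.
  by rewrite /box_vol; under eq_bigr do rewrite addrC addKr; rewrite prodr_const card_ord.
move=> vol_le.
have : (dl ^+ n <= dl ^+ n / 2)%R.
  rewrite -lee_fin; apply: le_trans vol_le _; apply: lime_le.
    by apply: is_cvg_nneseries => k _ _; rewrite lee_fin mul1r box_vol_ge0.
  apply: nearW => k; rewrite sumEFin lee_fin big_mkord.
  by apply/ltW/le_lt_trans/(small k); apply: ler_sum => j _; rewrite mul1r.
by have := exprn_gt0 n dl0; lra.
Qed.

Section ConvexHull.
Variables (R : realType) (n : nat).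
Notation V := 'rV[R]_n.
Implicit Types (A : set V) (u w z eta xi : V).

Lemma sub_conv_hull A : A `<=` conv_hull A.
Proof.
move=> z Az; exists 1%N, (fun=> 1), (fun=> z); split; first by move=> i; split.
by rewrite !big_ord1 scale1r.
Qed.

Lemma conv_hull_segment A w z t : conv_hull A w -> A z -> 0 <= t <= 1 ->
  conv_hull A ((1 - t) *: w + t *: z).
Proof.
move=> [p [c [a [ca [c1 ->]]]]] Az /andP[t0 t1].
exists p.+1, (fun i => if unlift ord0 i is Some i' then (1 - t) * c i' else t),
  (fun i => if unlift ord0 i is Some i' then a i' else z); split.
  move=> i; case: (unlift ord0 i) => [i'|] //; have [c0 Aa] := ca i'.
  by split => //; rewrite mulr_ge0 // subr_ge0.
rewrite !big_ord_recl !unlift_none; under eq_bigr do rewrite liftK.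
under [in X in _ /\ _ = X]eq_bigr do rewrite liftK.
split; first by rewrite -mulr_sumr c1 mulr1 addrC subrK.
by rewrite addrC scaler_sumr; congr (_ + _); apply: eq_bigr => i _; rewrite scalerA.
Qed.

Lemma conv_hull_coord_le A M w : conv_hull A w ->
  (forall z, A z -> forall i, `|z ord0 i| <= M) -> forall i, `|w ord0 i| <= M.
Proof.
move=> [p [c [a [ca [c1 ->]]]]] AM i.
rewrite summxE; apply: le_trans (ler_norm_sum _ _ _) _.
apply: le_trans (_ : _ <= \sum_(k < p) c k * M) _; last by rewrite -mulr_suml c1 mul1r.
apply: ler_sum => k _; have [c0 Aa] := ca k.
by rewrite mxE normrM ger0_norm // ler_wpM2l // AM.
Qed.

Lemma conv_hull_dotp_le A xi C w : conv_hull A w ->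
  (forall z, A z -> dotp z xi <= C) -> dotp w xi <= C.
Proof.
move=> [p [c [a [ca [c1 ->]]]]] AC; rewrite dotp_suml.
apply: le_trans (_ : _ <= \sum_(k < p) c k * C) _; last by rewrite -mulr_suml c1 mul1r.
apply: ler_sum => k _; have [c0 Aa] := ca k.
by rewrite dotpZl ler_wpM2l // AC.
Qed.

Lemma mul_div_succ_le (a c : R) : 0 <= c -> 0 <= a -> a / (c + 1) * c <= a.
Proof.
move=> c0 a0; rewrite mulrAC ler_pdivrMr ?ltr_wpDl // ler_wpM2l //.
by rewrite lerDl.
Qed.

Lemma closure_conv_hull_dotp_le A xi C eta :
  (forall z, A z -> dotp z xi <= C) -> closure (conv_hull A) eta -> dotp eta xi <= C.
Proof.
move=> AC cl_eta; apply/ler_addgt0Pr => e e0.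
have le0 : 0 < e / (l1norm xi + 1) by rewrite divr_gt0 // ltr_wpDl // l1norm_ge0.
have [w [Aw /(ball_coordP _ _ le0) eta_w]] := cl_eta _ (nbhsx_ballx eta _ le0).
have : `|dotp (w - eta) xi| <= e / (l1norm xi + 1) * l1norm xi.
  by apply: dotp_le_l1norm => i; rewrite !mxE ltW.
have := conv_hull_dotp_le Aw AC.
rewrite dotpBl ler_norml => wC /andP[close _].
have : e / (l1norm xi + 1) * l1norm xi <= e.
  by rewrite mulrAC ler_pdivrMr ?ler_wpM2l ?lerDl // ?ltW // ltr_wpDl // l1norm_ge0.
lra.
Qed.

Lemma dotp_le_sqr u K : enorm u <= K -> dotp u u <= K ^+ 2.
Proof.
move=> uK; rewrite -enorm_sqr ler_sqr ?nnegrE ?enorm_ge0 //.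
exact: le_trans (enorm_ge0 u) uK.
Qed.

Lemma near_minimizer_dotp_le A eta w z t eps :
  conv_hull A w -> A z -> 0 < t <= 1 ->
  (forall w', conv_hull A w' -> dotp (eta - w) (eta - w) - eps <= dotp (eta - w') (eta - w')) ->
  2 * t * dotp (eta - w) (z - w) <= eps + t ^+ 2 * dotp (z - w) (z - w).
Proof.
move=> Aw Az /andP[t0 t1] near_min.
have t01 : 0 <= t <= 1 by rewrite ltW.
have := near_min _ (conv_hull_segment Aw Az t01).
have -> : eta - ((1 - t) *: w + t *: z) = (eta - w) - t *: (z - w).
  by apply/rowP => i; rewrite !mxE; ring.
rewrite dotpBZ; lra.
Qed.

Lemma conv_hull_near_minimizer A eta eps : A !=set0 -> 0 < eps ->
  exists2 w, conv_hull A w & forall w', conv_hull A w' ->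
    dotp (eta - w) (eta - w) - eps <= dotp (eta - w') (eta - w').
Proof.
move=> [z0 Az0] eps0; pose E := [set dotp (eta - w) (eta - w) | w in conv_hull A].
have E_inf : has_inf E.
  split; first by exists (dotp (eta - z0) (eta - z0)), z0 => //; exact: sub_conv_hull.
  by exists 0 => _ [w _ <-]; exact: dotp_ge0.
have [_ [w Aw <-] near_inf] := inf_adherent eps0 E_inf.
exists w => // w' Aw'; have : inf E <= dotp (eta - w') (eta - w').
  by apply: (ge_inf (proj2 E_inf)); exists w'.
by move: near_inf; lra.
Qed.

Lemma unit_separation A eta u a : 0 < enorm u -> 0 < a ->
  (forall z, A z -> dotp z u <= dotp eta u - a) ->
  exists xi delta, [/\ enorm xi = 1, 0 < delta &
    forall z, A z -> dotp z xi <= dotp eta xi - delta].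
Proof.
move=> u0 a0 sep; exists ((enorm u)^-1 *: u), ((enorm u)^-1 * a); split.
- rewrite /enorm dotpZl dotpZr mulrA -expr2 exprVn -/(enorm u) -enorm_sqr.
  by rewrite mulVf ?sqrtr1 // expf_neq0 // gt_eqF.
- by rewrite mulr_gt0 ?invr_gt0.
- by move=> z Az; rewrite !dotpZr -mulrBr ler_pM2l ?invr_gt0 // sep.
Qed.

(* Take w in the hull almost minimising |eta - w|: moving from w towards any
   z in A cannot decrease |eta - .| by much, so A lies on the far side of a
   hyperplane orthogonal to eta - w. *)
Lemma conv_hull_separation A eta M r :
  A !=set0 -> (forall z, A z -> forall i, `|z ord0 i| <= M) -> 0 < r ->
  (forall w, conv_hull A w -> r <= enorm (eta - w)) ->
  exists xi delta, [/\ enorm xi = 1, 0 < delta &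
    forall z, A z -> dotp z xi <= dotp eta xi - delta].
Proof.
move=> A0 AM r0 far.
pose B := (n%:R * (M + M)) ^+ 2.
have B0 : 0 <= B by exact: sqr_ge0.
have r20 : 0 < r ^+ 2 by exact: exprn_gt0.
pose t := r ^+ 2 / (2 * (B + r ^+ 2)).
have t0 : 0 < t by rewrite divr_gt0 // mulr_gt0 // ltr_wpDl.
have tE : t * (2 * (B + r ^+ 2)) = r ^+ 2 by rewrite divfK // gt_eqF // mulr_gt0 // ltr_wpDl.
have t01 : 0 < t <= 1 by rewrite t0 /=; nra.
have [w Aw near_min] := conv_hull_near_minimizer eta A0 (divr_gt0 (mulr_gt0 t0 r20) (ltr0Sn R 1)).
apply: (@unit_separation _ _ (eta - w) (r ^+ 2 / 2)); first exact: lt_le_trans r0 (far w Aw).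
  by rewrite divr_gt0.
move=> z Az; have zwB : dotp (z - w) (z - w) <= B.
  apply/dotp_le_sqr/enorm_le_coord => i; rewrite !mxE.
  by apply: le_trans (ler_normB _ _) (lerD (AM z Az i) (conv_hull_coord_le Aw AM i)).
have first_order := near_minimizer_dotp_le Aw Az t01 near_min.
have : dotp (eta - w) (z - w) <= r ^+ 2 / 2.
  have tB : t * B <= r ^+ 2 / 2 by nra.
  have : t ^+ 2 * dotp (z - w) (z - w) <= t ^+ 2 * B by apply: ler_wpM2l; rewrite ?sqr_ge0.
  have := ler_wpM2l (ltW t0) tB.
  move=> ? ?; rewrite -(ler_pM2l t0); lra.
have : r ^+ 2 <= dotp (eta - w) (eta - w).
  by rewrite -enorm_sqr ler_sqr ?nnegrE ?far ?enorm_ge0 // ltW.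
have -> : dotp eta (eta - w) = dotp (eta - w) (eta - w) + dotp w (eta - w).
  by rewrite -dotpDl subrK.
move=> ur; rewrite dotpBr (dotpC _ z) (dotpC _ w); lra.
Qed.

Lemma closure_conv_hull_separation A eta M :
  A !=set0 -> (forall z, A z -> forall i, `|z ord0 i| <= M) ->
  ~ closure (conv_hull A) eta ->
  exists xi delta, [/\ enorm xi = 1, 0 < delta &
    forall z, A z -> dotp z xi <= dotp eta xi - delta].
Proof.
move=> A0 AM /existsNP [U /not_implyP [etaU /set0P/negP/negPn/eqP hullU]].
have /nbhs_ballP [r r0 {}etaU] := etaU.
apply: (conv_hull_separation A0 AM r0) => w Aw; rewrite leNgt; apply/negP => wr.
have : (conv_hull A `&` U) w.
  split => //; apply/etaU/(ball_coordP _ _ r0) => i.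
  by apply: le_lt_trans wr; rewrite distrC; have := coord_le_enorm (eta - w) i; rewrite !mxE.
by rewrite hullU.
Qed.

End ConvexHull.

Section Envelopes.
Variables (R : realType) (n : nat).
Notation V := 'rV[R]_n.
Variables (X : set V) (large : set V -> Prop).
Hypothesis large_dense : forall S, large S -> S `<=` X /\ dense_in X S.

Definition majorants (f : V -> R) (k : nat) := [set phi : V -> R |
  Lip X k%:R phi /\ exists S, large S /\ forall y, S y -> f y <= phi y].

Section Bounded.
Variables (f : V -> R) (B : R) (k : nat).
Hypothesis f_bounded : forall y, X y -> `|f y| <= B.

Lemma majorant_ge z phi : X z -> majorants f k phi -> - B - k%:R * n%:R <= phi z.
Proof.
move=> Xz [phiL [S [lS fphi]]]; have [SX dS] := large_dense lS.
have [y Sy yz] := dS z 1 Xz ltr01.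
have zy : enorm (z - y) <= n%:R by rewrite -[n%:R]mulr1; apply: enorm_le_coord => i;
  rewrite !mxE distrC ltW.
have := phiL z y Xz (SX y Sy); have := fphi y Sy; have := f_bounded (SX y Sy).
have := ler_wpM2l (ler0n R k) zy.
rewrite !ler_norml => ? /andP[? ?] ? /andP[? ?]; lra.
Qed.

Lemma cst_majorant S : large S -> majorants f k (fun=> B).
Proof.
move=> lS; split; first by move=> y z _ _; rewrite subrr normr0 mulr_ge0 ?enorm_ge0.
exists S; split => // y Sy.
by have := f_bounded ((proj1 (large_dense lS)) y Sy); rewrite ler_norml => /andP[].
Qed.

Lemma up_env_le z phi : X z -> majorants f k phi -> up_env X large f k z <= phi z.
Proof.
move=> Xz fphi; apply: (ge_inf _ (ex_intro2 _ _ phi fphi erefl)).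
by exists (- B - k%:R * n%:R) => _ [psi fpsi <-]; exact: majorant_ge.
Qed.

Lemma le_up_env S z C : large S -> (forall phi, majorants f k phi -> C <= phi z) ->
  C <= up_env X large f k z.
Proof.
move=> lS Cle; apply: lb_le_inf; first by exists B, (fun=> B) => //; exact: cst_majorant lS.
by move=> _ [psi fpsi <-]; exact: Cle.
Qed.

Lemma up_env_bound S z : large S -> X z -> `|up_env X large f k z| <= B + k%:R * n%:R.
Proof.
move=> lS Xz; rewrite ler_norml; apply/andP; split.
  by rewrite opprD; apply: le_up_env lS _ => phi; exact: majorant_ge.
apply: le_trans (up_env_le Xz (cst_majorant lS)) _.
by rewrite lerDl mulr_ge0.
Qed.

End Bounded.

(* Approximate y by points of the dense set S, using the continuity of G at y
   and the Lipschitz continuity of psi. *)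
Lemma cont_dotp_le_majorant (G : V -> V) xi k psi y :
  cont_set X G y -> majorants (fun y => dotp (G y) xi) k psi -> dotp (G y) xi <= psi y.
Proof.
move=> [Xy cGy] [psiL [S [lS Gpsi]]]; have [SX dS] := large_dense lS.
apply/ler_addgt0Pr => e e0.
have e1 : 0 < e / 2 / (l1norm xi + 1) by rewrite !divr_gt0 // ltr_wpDl ?l1norm_ge0.
have /nbhs_ballP [r r0 Gnear] := cGy _ (nbhsx_ballx (G y) _ e1).
pose r' := Num.min r (e / 2 / (k%:R * n%:R + 1)).
have r'0 : 0 < r' by rewrite lt_min r0 !divr_gt0 // ltr_wpDl // mulr_ge0.
have [y' Sy' y'y] := dS y r' Xy r'0.
have /(ball_coordP _ _ e1) Gy'y : ball (G y) (e / 2 / (l1norm xi + 1)) (G y').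
  apply: Gnear; apply/(ball_coordP _ _ r0) => i.
  by apply: lt_le_trans (y'y i) _; rewrite ge_min lexx.
have dotp_close : dotp (G y) xi - dotp (G y') xi <= e / 2.
  have : `|dotp (G y - G y') xi| <= e / 2 / (l1norm xi + 1) * l1norm xi.
    by apply: dotp_le_l1norm => i; rewrite !mxE distrC ltW.
  rewrite dotpBl ler_norml => /andP[_ close]; apply: le_trans close _.
  by apply: mul_div_succ_le; rewrite ?l1norm_ge0 ?divr_ge0 ?ltW.
have psi_close : psi y' - psi y <= e / 2.
  have kn0 : 0 <= k%:R * n%:R :> R by rewrite mulr_ge0.
  have knr : k%:R * (n%:R * r') <= e / 2.
    rewrite mulrA; apply: le_trans (mul_div_succ_le kn0 (ltW (divr_gt0 e0 _))) => //.
    by rewrite mulrC ler_wpM2r // ge_min lexx orbT.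
  have : k%:R * enorm (y' - y) <= k%:R * (n%:R * r').
    by apply/ler_wpM2l/enorm_le_coord => // i; rewrite !mxE ltW.
  have := psiL y' y (SX y' Sy') Xy; rewrite ler_norml => /andP[_]; lra.
have := Gpsi y' Sy'; lra.
Qed.

Lemma value_dotp_le_majorant (G : V -> V) xi k psi x eta :
  X x -> value X G x eta -> majorants (fun y => dotp (G y) xi) k psi ->
  dotp eta xi <= psi x.
Proof.
move=> Xx eta_x Gpsi; have [psiL _] := Gpsi.
apply/ler_addgt0Pr => e e0.
have rho0 : 0 < e / (k%:R + 1) by rewrite divr_gt0 // ltr_wpDl.
apply: closure_conv_hull_dotp_le (eta_x _ rho0) => _ [y [xy cy] <-].
apply: le_trans (cont_dotp_le_majorant cy Gpsi) _.
have : k%:R * enorm (y - x) <= k%:R * (e / (k%:R + 1)) by rewrite ler_wpM2l // ltW.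
have := mul_div_succ_le (ler0n R k) (ltW e0); rewrite mulrC.
have := psiL y x (proj1 cy) Xx; rewrite ler_norml => /andP[_]; lra.
Qed.

Lemma value_dotp_le_up_env (G : V -> V) xi k x eta B S :
  large S -> (forall y, X y -> `|dotp (G y) xi| <= B) ->
  X x -> value X G x eta -> dotp eta xi <= up_env X large (fun y => dotp (G y) xi) k x.
Proof.
move=> lS GB Xx eta_x; apply: (le_up_env (k := k) GB lS) => psi Gpsi.
exact: value_dotp_le_majorant Xx eta_x Gpsi.
Qed.

End Envelopes.

Section Hausdorff.
Variables (R : realType) (n : nat).
Notation V := 'rV[R]_n.
Implicit Types (p q : V * R).

Lemma pdist_ge0 p q : 0 <= pdist p q.
Proof. exact: sqrtr_ge0. Qed.

Lemma le_sqrt (a b : R) : 0 <= a -> a ^+ 2 <= b -> a <= Num.sqrt b.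
Proof.
move=> a0 ab; rewrite -(ger0_norm a0) -sqrtr_sqr ler_sqrt //.
exact: le_trans (sqr_ge0 a) ab.
Qed.

Lemma coord_le_pdist p q i : `|p.1 ord0 i - q.1 ord0 i| <= pdist p q.
Proof.
apply: le_trans (_ : enorm (p.1 - q.1) <= _).
  by have := coord_le_enorm (p.1 - q.1) i; rewrite !mxE.
by apply: le_sqrt; rewrite ?enorm_ge0 // lerDl sqr_ge0.
Qed.

Lemma snd_le_pdist p q : `|p.2 - q.2| <= pdist p q.
Proof. by apply: le_sqrt; rewrite // real_normK ?num_real // lerDr sqr_ge0. Qed.

Lemma pdist_le p q : pdist p q <= l1norm (p.1 - q.1) + `|p.2 - q.2|.
Proof.
have e0 := enorm_ge0 (p.1 - q.1).
apply: le_trans (_ : _ <= enorm (p.1 - q.1) + `|p.2 - q.2|) _; last first.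
  by rewrite lerD2r enorm_le_l1norm.
rewrite -[X in _ <= X]ger0_norm ?addr_ge0 // -sqrtr_sqr ler_sqrt ?sqr_ge0 //.
rewrite -[(p.2 - q.2) ^+ 2]real_normK ?num_real // sqrrD -addrA lerD2l lerDr.
by rewrite mulrn_wge0 // mulr_ge0.
Qed.

Lemma pt_set_dist_le_hausdorff (A B : set (V * R)) a b0 K : A a -> B b0 ->
  (forall a b, A a -> B b -> pdist a b <= K) -> pt_set_dist a B <= hausdorff A B.
Proof.
move=> Aa Bb0 AB_K; apply: le_trans (_ : _ <= sup [set pt_set_dist a B | a in A]) _.
  apply: ub_le_sup; last by exists a.
  exists K => _ [a' Aa' <-]; apply: le_trans (AB_K a' b0 Aa' Bb0).
  apply: ge_inf; last by exists b0.
  by exists 0 => _ [b _ <-]; exact: pdist_ge0.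
by rewrite le_max lexx.
Qed.

Variable X : set V.

Lemma closure_graph_near (g : V -> R) p e : closure (graph X g) p -> 0 < e ->
  exists y, [/\ X y, forall i, `|y ord0 i - p.1 ord0 i| < e & `|g y - p.2| < e].
Proof.
move=> cl_p e0; have [q [[Xq gq] [/(ball_coordP _ _ e0) pq1 pq2]]] :=
  cl_p _ (nbhsx_ballx p e e0).
by exists q.1; split => //; rewrite -gq distrC.
Qed.

Lemma hdist_lt_shift (g1 g2 : V -> R) MX B1 B2 h y :
  (forall x, X x -> enorm x <= MX) ->
  (forall z, X z -> `|g1 z| <= B1) -> (forall z, X z -> `|g2 z| <= B2) ->
  X y -> hdist X g1 g2 < h ->
  exists z, [/\ X z, g1 y <= g2 z + 2 * h & forall i, `|z ord0 i - y ord0 i| < 2 * h].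
Proof.
move=> XMX g1B g2B Xy g12h.
set Ac := closure (graph X g1); set Bc := closure (graph X g2).
have graph_closure g : graph X g `<=` closure (graph X g) by exact: subset_closure.
have in_box g B p : (forall z, X z -> `|g z| <= B) -> closure (graph X g) p ->
    (forall i, `|p.1 ord0 i| <= MX + 1) /\ `|p.2| <= B + 1.
  move=> gB /(closure_graph_near (e := 1)) /(_ ltr01) [q [Xq qp gq]]; split.
    move=> i; rewrite -[p.1 ord0 i](subrK (q ord0 i)); apply: le_trans (ler_normD _ _) _.
    by rewrite addrC lerD ?(le_trans (coord_le_enorm q i)) ?XMX // distrC ltW.
  rewrite -[p.2](subrK (g q)); apply: le_trans (ler_normD _ _) _.
  by rewrite addrC lerD ?gB // distrC ltW.
have dist_bound a b : Ac a -> Bc b -> pdist a b <= n%:R * (2 * (MX + 1)) + (B1 + 1 + (B2 + 1)).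
  move=> /(in_box _ _ _ g1B) [a1 a2] /(in_box _ _ _ g2B) [b1 b2].
  apply: le_trans (pdist_le a b) (lerD (l1norm_le _) _) => [i|]; rewrite ?mxE.
    by apply: le_trans (ler_normB _ _) _; rewrite mulr_natl mulr2n lerD.
  by apply: le_trans (ler_normB _ _) (lerD a2 b2).
have : pt_set_dist (y, g1 y) Bc < h.
  apply: le_lt_trans g12h; apply: (pt_set_dist_le_hausdorff (b0 := (y, g2 y))) dist_bound;
  exact: graph_closure.
move=> /inf_lt [|_ [q Bq <-] yq]; first by exists (pdist (y, g1 y) (y, g2 y)), (y, g2 y) => //; exact: graph_closure.
have h0 : 0 < h := le_lt_trans (pdist_ge0 _ _) yq.
have [z [Xz zq gzq]] := closure_graph_near Bq h0.
exists z; split => //.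
  have := snd_le_pdist (y, g1 y) q; move: gzq; rewrite /= !ler_norml !ltr_norml.
  move=> /andP[? ?] /andP[? ?]; lra.
move=> i; have := coord_le_pdist (y, g1 y) q i; have := zq i; rewrite /= => ? ?.
rewrite -[z ord0 i - y ord0 i](subrKA (q.1 ord0 i)).
apply: le_lt_trans (ler_normD _ _) _; rewrite (distrC (q.1 ord0 i)); lra.
Qed.

End Hausdorff.

Section ClosedGraph.
Variables (R : realType) (n : nat).
Notation V := 'rV[R]_n.
Variables (X : set V) (large : set V -> Prop) (dd : (V -> R) -> (V -> R) -> R).
Hypothesis large_dense : forall S, large S -> S `<=` X /\ dense_in X S.
Hypothesis hdist_le_dd : forall f g, hdist X f g <= dd f g.

Definition coord_bounded (G : V -> V) := exists M, forall y, X y -> forall i, `|G y ord0 i| <= M.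

Lemma bounded_on_coord (G : V -> V) :
  bounded_on X (fun v : V => Num.sqrt (\sum_(i < n) v ord0 i ^+ 2)) G -> coord_bounded G.
Proof.
move=> [M GM]; exists M => y Xy i; apply: le_trans (coord_le_enorm (G y) i) _.
by have := GM y Xy; rewrite /enorm /dotp; under eq_bigr do rewrite expr2.
Qed.

Lemma dotp_bounded (G : V -> V) M xi : (forall y, X y -> forall i, `|G y ord0 i| <= M) ->
  forall y, X y -> `|dotp (G y) xi| <= M * l1norm xi.
Proof. by move=> GM y Xy; apply: dotp_le_l1norm; exact: GM. Qed.

Lemma not_value_separated (F : V -> V) x eta : coord_bounded F -> large (cont_set X F) ->
  X x -> ~ value X F x eta ->
  exists e xi delta, [/\ 0 < e, enorm xi = 1, 0 < delta &
    forall y, cont_set X F y -> enorm (y - x) < e -> dotp (F y) xi <= dotp eta xi - delta].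
Proof.
move=> [M FM] lF Xx /existsNP [e /not_implyP [e0 not_cl]].
have [SX dS] := large_dense lF.
have e' : 0 < e / (n%:R + 1) by rewrite divr_gt0 // ltr_wpDl.
have A0 : F @` (eball x e `&` cont_set X F) !=set0.
  have [y Fy yx] := dS x _ Xx e'; exists (F y), y => //; split => //.
  apply: le_lt_trans (_ : _ <= n%:R * (e / (n%:R + 1))) _.
    by apply: enorm_le_coord => i; rewrite !mxE ltW.
  by rewrite mulrA ltr_pdivrMr ?ltr_wpDl // mulrDr mulr1 mulrC ltrDl.
have AM z : (F @` (eball x e `&` cont_set X F)) z -> forall i, `|z ord0 i| <= M.
  by move=> [y [_ [Xy _]] <-]; exact: FM.
have [xi [delta [xi1 delta0 sep]]] := closure_conv_hull_separation A0 AM not_cl.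
by exists e, xi, delta; split => // y Fy xy; apply: sep; exists y.
Qed.

(* A cone of large enough slope over the level c is a majorant: near x it
   dominates c, far from x it dominates the bound of f. *)
Lemma cone_majorant (f : V -> R) B S c e x : 0 < e -> large S ->
  (forall y, X y -> `|f y| <= B) -> (forall y, S y -> enorm (y - x) < e -> f y <= c) ->
  exists k L, [/\ (0 < k)%N, 0 <= L &
    forall z, X z -> up_env X large f k z <= c + L * l1norm (z - x)].
Proof.
move=> e0 lS fB fc; pose L := `|B - c| / e.
have L0 : 0 <= L by rewrite divr_ge0 // ltW.
exists (Num.trunc (n%:R * L)).+1, L; split => // z Xz.
apply: (up_env_le large_dense fB Xz (phi := fun y => c + L * l1norm (y - x))); split.
  move=> y1 y2 _ _; rewrite opprD addrACA subrr add0r -mulrBr normrM ger0_norm //.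
  apply: le_trans (ler_wpM2l L0 (l1norm_lipschitz _ _)) _.
  rewrite opprB addrA subrK; apply: le_trans (ler_wpM2l L0 (l1norm_le_enorm _)) _.
  by rewrite mulrA ler_wpM2r ?enorm_ge0 // mulrC ltW // truncnS_gt.
exists S; split => // y Sy; have [yx|yx] := ltP (enorm (y - x)) e.
  by apply: le_trans (fc y Sy yx) _; rewrite lerDl mulr_ge0 ?l1norm_ge0.
have : B - c <= L * l1norm (y - x).
  apply: le_trans (ler_norm _) _; rewrite -[`|B - c|](@divfK _ e) ?gt_eqF // -/L.
  exact: (ler_wpM2l L0) (le_trans yx (enorm_le_l1norm _)).
have := fB y (proj1 (large_dense lS) y Sy); rewrite ler_norml => /andP[_]; lra.
Qed.

Lemma hdist_up_env_le_vec_metric (G F : V -> V) xi k : enorm xi = 1 -> (0 < k)%N ->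
  ((hdist X (up_env X large (fun y => dotp (G y) xi) k)
            (up_env X large (fun y => dotp (F y) xi) k))%:E
    <= vec_metric X large dd G F)%E.
Proof.
move=> xi1 k0; apply: le_trans (_ : _ <= scal_metric X large dd _ _)%E _.
  apply: le_trans (ereal_sup_ubound (ex_intro2 _ _ k k0 erefl)).
  by rewrite lee_fin le_max; apply/orP; right; exact: hdist_le_dd.
exact: ereal_sup_ubound (ex_intro2 _ _ xi xi1 erefl).
Qed.

Lemma value_dotp_le_cone (G F : V -> V) xi k c L h x xj etaj :
  bounded_set_e X -> coord_bounded G -> coord_bounded F ->
  large (cont_set X G) -> large (cont_set X F) -> X xj -> value X G xj etaj -> 0 <= L ->
  (forall z, X z -> up_env X large (fun y => dotp (F y) xi) k z <= c + L * l1norm (z - x)) ->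
  hdist X (up_env X large (fun y => dotp (G y) xi) k)
          (up_env X large (fun y => dotp (F y) xi) k) < h ->
  dotp etaj xi <= c + 2 * h + L * (n%:R * (2 * h + enorm (xj - x))).
Proof.
move=> [MX XMX] [MG GM] [MF FM] lG lF Xxj etaj_xj L0 cone close.
have [z [Xz gz zxj]] := hdist_lt_shift XMX
  (fun y Xy => up_env_bound large_dense k (dotp_bounded xi GM) lG Xy)
  (fun y Xy => up_env_bound large_dense k (dotp_bounded xi FM) lF Xy) Xxj close.
have zx : l1norm (z - x) <= n%:R * (2 * h + enorm (xj - x)).
  apply: l1norm_le => i; rewrite mxE -[z ord0 i](subrK (xj ord0 i)) -addrA.
  apply: le_trans (ler_normD _ _) (lerD (ltW (zxj i)) _).
  by have := coord_le_enorm (xj - x) i; rewrite !mxE.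
have := value_dotp_le_up_env large_dense k lG (dotp_bounded xi GM) Xxj etaj_xj.
have := cone z Xz; have := ler_wpM2l L0 zx; lra.
Qed.

Lemma value_closed_graph (Fs : nat -> V -> V) (F : V -> V) (xs : nat -> V) x
    (etas : nat -> V) eta :
  bounded_set_e X -> (forall k, coord_bounded (Fs k) /\ large (cont_set X (Fs k))) ->
  coord_bounded F -> large (cont_set X F) ->
  (forall e, 0 < e -> exists N, forall k, (N <= k)%N -> (vec_metric X large dd (Fs k) F < e%:E)%E) ->
  (forall k, X (xs k)) -> X x ->
  (forall e, 0 < e -> exists N, forall k, (N <= k)%N -> enorm (xs k - x) < e) ->
  (forall e, 0 < e -> exists N, forall k, (N <= k)%N -> enorm (etas k - eta) < e) ->
  (forall k, value X (Fs k) (xs k) (etas k)) -> value X F x eta.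
Proof.
move=> Xb Fsb Fb lF Fs_F Xxs Xx xs_x etas_eta etas_xs; apply: contrapT => not_eta_x.
have [e [xi [delta [e0 xi1 delta0 sep]]]] := not_value_separated Fb lF Xx not_eta_x.
have [M FM] := Fb.
have [k [L [k0 L0 cone]]] := cone_majorant e0 lF (dotp_bounded xi FM) sep.
pose h := delta / (n%:R + 3 + 3 * L * n%:R).
have h0 : 0 < h by rewrite divr_gt0 // ltr_wpDr ?mulr_ge0 // ltr_wpDl.
have [N1 N1P] := Fs_F h h0; have [N2 N2P] := xs_x h h0; have [N3 N3P] := etas_eta h h0.
pose j := maxn N1 (maxn N2 N3).
have [Fsjb lFsj] := Fsb j.
have close : hdist X (up_env X large (fun y => dotp (Fs j y) xi) k)
                     (up_env X large (fun y => dotp (F y) xi) k) < h.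
  rewrite -lte_fin; apply: le_lt_trans (hdist_up_env_le_vec_metric _ _ xi1 k0) _.
  by apply: N1P; rewrite leq_maxl.
have := value_dotp_le_cone Xb Fsjb Fb lFsj lF (Xxs j) (etas_xs j) L0 cone close.
have xsj : enorm (xs j - x) < h by apply: N2P; rewrite (leq_trans (leq_maxl _ N3)) ?leq_maxr.
have etasj : dotp eta xi - dotp (etas j) xi <= h * n%:R.
  rewrite -dotpBl; apply: le_trans (ler_norm _) _.
  apply: le_trans (dotp_le_l1norm (r := h) _ _) _ => [i|].
    rewrite -opprB mxE normrN; apply: le_trans (coord_le_enorm _ i) (ltW (N3P j _)).
    by rewrite (leq_trans (leq_maxr N2 _)) ?leq_maxr.
  by apply: ler_wpM2l; [exact: ltW | have := l1norm_le_enorm xi; rewrite xi1 mulr1].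
have : h * (n%:R + 3 + 3 * L * n%:R) = delta by rewrite divfK // gt_eqF // ltr_wpDr ?mulr_ge0 // ltr_wpDl.
have : L * n%:R * enorm (xs j - x) <= L * n%:R * h by rewrite ler_wpM2l ?mulr_ge0 // ltW.
nra.
Qed.

End ClosedGraph.

Lemma iter_int_ge0 (R : realType) m (f : 'rV[R]_m -> \bar R) :
  (forall v, (0 <= f v)%E) -> (0 <= iter_int f)%E.
Proof.
elim: m f => [|m IHm] f f0 /=; first exact: f0.
by apply: integral_ge0 => a _; apply: IHm.
Qed.

Lemma hdist_le_ddist (R : realType) (n : nat) (X : set 'rV[R]_n) f g :
  hdist X f g <= ddist X f g.
Proof.
rewrite /ddist lerDl /int_abs_diff; apply/fine_ge0/iter_int_ge0 => v.
by case: ifP; rewrite lee_fin.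
Qed.

Unset Implicit Arguments.

Theorem proposition2p4 (R : realType) (n : nat) (X : set 'rV[R]_n) :
  X !=set0 -> open X -> bounded_set_e X ->
  (forall (Fs : nat -> 'rV[R]_n -> 'rV[R]_n) (F : 'rV[R]_n -> 'rV[R]_n)
          (xs : nat -> 'rV[R]_n) (x : 'rV[R]_n)
          (etas : nat -> 'rV[R]_n) (eta : 'rV[R]_n),
     (forall k, is_Ccm X (Fs k)) -> is_Ccm X F ->
     (forall e : R, 0 < e -> exists N, forall k, (N <= k)%N ->
        (s_metric X (Fs k) F < e%:E)%E) ->
     (forall k, X (xs k)) -> X x ->
     (forall e : R, 0 < e -> exists N, forall k, (N <= k)%N -> enorm (xs k - x) < e) ->
     (forall e : R, 0 < e -> exists N, forall k, (N <= k)%N -> enorm (etas k - eta) < e) ->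
     (forall k, value X (Fs k) (xs k) (etas k)) ->
     value X F x eta) /\
  (forall (Fs : nat -> 'rV[R]_n -> 'rV[R]_n) (F : 'rV[R]_n -> 'rV[R]_n)
          (xs : nat -> 'rV[R]_n) (x : 'rV[R]_n)
          (etas : nat -> 'rV[R]_n) (eta : 'rV[R]_n),
     (forall k, is_Cae X (Fs k)) -> is_Cae X F ->
     (forall e : R, 0 < e -> exists N, forall k, (N <= k)%N ->
        (r_metric X (Fs k) F < e%:E)%E) ->
     (forall k, X (xs k)) -> X x ->
     (forall e : R, 0 < e -> exists N, forall k, (N <= k)%N -> enorm (xs k - x) < e) ->
     (forall e : R, 0 < e -> exists N, forall k, (N <= k)%N -> enorm (etas k - eta) < e) ->
     (forall k, value X (Fs k) (xs k) (etas k)) ->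
     value X F x eta).
Proof.
move=> _ oX Xb; split=> Fs F xs x etas eta Fs_reg [Fb lF].
- apply: (value_closed_graph (large := comeager X) (dd := hdist X)) => //.
  + by move=> S lS; split; [exact: lS.1 | exact: comeager_dense].
  + by move=> k; have [Fsb lFs] := Fs_reg k; split => //; exact: bounded_on_coord.
  + exact: bounded_on_coord.
- apply: (value_closed_graph (large := full_ae X) (dd := ddist X)) => //.
  + by move=> S lS; split; [exact: lS.1 | exact: full_ae_dense].
  + exact: hdist_le_ddist.
  + by move=> k; have [Fsb lFs] := Fs_reg k; split => //; exact: bounded_on_coord.
  + exact: bounded_on_coord.
Qed.
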